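(* For every integer $n\ge1$ there exist three real polynomials $a_1(X)$, $a_2(X)$ and $b(X)$ of degree $n$ such that (i) all the roots of $a_1$, $a_2$, $b$ and $a_1b+a_2$ are real, and (ii) all the roots of $a_2$ and of $a_1b+a_2$ are smaller than all the roots of $b$. *)

From mathcomp Require Import all_boot all_order all_algebra.
From mathcomp Require Import reals.
Set Implicit Arguments. Unset Strict Implicit. Unset Printing Implicit Defensive.
Import Order.TTheory GRing.Theory Num.Theory.
Local Open Scope ring_scope.

Definition real_rooted (R : realType) (p : {poly R}) : Prop :=
  exists s : seq R, p = lead_coef p *: \prod_(x <- s) ('X - x%:P).

(* Take b = X^n, a2 = sum_(i <= n) X^i / Q^(i^2) and a1 = sum_(i <= n) X^i / Q^((i+n)^2),
   so that a1 b + a2 = sum_(i <= 2n) w_i X^i / Q^(i^2) with w_n = 2 and w_i = 1 otherwise.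
   All three have positive coefficients, hence only negative roots, while the only root of b
   is 0.  When Q > 2N and 1 <= w_i <= 2, a weighted partial theta polynomial of degree N
   alternates in sign at the N + 1 points -Q^(2j): there the j-th monomial dominates the sum
   of all the others, each of which is smaller by a factor Q.
   The intermediate value theorem then yields N distinct real roots. *)

From mathcomp Require Import all_boot all_order all_algebra.
From mathcomp Require Import reals polyrcf zify ring.
Set Implicit Arguments.
Unset Strict Implicit.
Unset Printing Implicit Defensive.

Import Order.TTheory GRing.Theory Num.Theory.
Local Open Scope ring_scope.

Lemma nonneg_coef_root_lt0 (R : realDomainType) (p : {poly R}) (x : R) :
  (forall i, 0 <= p`_i) -> 0 < p`_0 -> root p x -> x < 0.
Proof.
move=> p_ge0 p0_gt0 px; rewrite ltNge; apply: contraTN px => x_ge0.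
have sp : (0 < size p)%N.
  by rewrite lt0n size_poly_eq0; apply: contraTneq p0_gt0 => ->; rewrite coef0 ltxx.
rewrite /root horner_coef -(prednK sp) big_ord_recl gt_eqF // expr0 mulr1 ltr_wpDr //.
by apply: sumr_ge0 => i _; rewrite mulr_ge0 ?exprn_ge0.
Qed.

Lemma sumr_gt0_dominant (R : realDomainType) (I : finType) (F : I -> R) (j : I) :
  \sum_(i | i != j) `|F i| < F j -> 0 < \sum_i F i.
Proof.
move=> F_dom; rewrite (bigD1 j) //=.
apply: lt_le_trans (lerD (lexx (F j)) (lerNnormlW (ler_norm_sum _ _ _))).
by rewrite subr_gt0.
Qed.

Section RealRooted.
Variable R : realType.

Lemma roots_of_sign_changes (f : {poly R}) (N : nat) (y : nat -> R) :
  (forall j, (j < N)%N -> y j.+1 < y j) ->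
  (forall j, (j <= N)%N -> 0 < (-1) ^+ j * f.[y j]) ->
  exists rs : seq R,
    [/\ size rs = N, all (root f) rs, uniq rs & all (fun x => y N < x) rs].
Proof.
elim: N => [|N IHN] y_dec f_sign; first by exists [::].
have [|//|rs [size_rs rs_roots rs_uniq rs_gt]] := IHN.
- by move=> j jN; apply: y_dec; apply: ltnW.
- by move=> j jN; apply: f_sign; apply: leqW.
have f_change : f.[y N.+1] * f.[y N] < 0.
  have := mulr_gt0 (f_sign _ (leqnn N.+1)) (f_sign _ (leqnSn N)).
  by rewrite mulrACA -exprD addSn addnn -signr_odd /= odd_double mulN1r oppr_gt0.
have [x] := poly_ivtoo (ltW (y_dec _ (ltnSn N))) f_change.
rewrite in_itv /= => /andP[x_gt x_lt] fx.
have rs_gt_x : all (fun z => x < z) rs.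
  by apply: sub_all rs_gt => z; apply: lt_trans.
exists (x :: rs); split => /=; first by rewrite size_rs.
- by rewrite fx rs_roots.
- by rewrite rs_uniq andbT; apply/negP => /(allP rs_gt_x); rewrite ltxx.
- by rewrite x_gt; apply: sub_all rs_gt_x => z; apply: lt_trans.
Qed.

Lemma real_rooted_sign_changes (f : {poly R}) (N : nat) (y : nat -> R) :
  size f = N.+1 ->
  (forall j, (j < N)%N -> y j.+1 < y j) ->
  (forall j, (j <= N)%N -> 0 < (-1) ^+ j * f.[y j]) ->
  real_rooted f.
Proof.
move=> size_f y_dec f_sign.
have [rs [size_rs rs_roots rs_uniq _]] := roots_of_sign_changes y_dec f_sign.
by exists rs; apply: all_roots_prod_XsubC; rewrite ?uniq_rootsE // size_f size_rs.
Qed.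

Lemma real_rooted_Xn n : real_rooted ('X^n : {poly R}).
Proof.
exists (nseq n 0); rewrite lead_coefXn scale1r.
by elim: n => [|n IHn]; rewrite ?big_nil // big_cons subr0 exprS IHn.
Qed.

End RealRooted.

Section ThetaPoly.
Variable R : realType.
Implicit Types (Q : R) (w : nat -> R).

Definition theta_poly Q (s N : nat) w : {poly R} :=
  \poly_(i < N.+1) (w i / Q ^+ ((i + s) ^ 2)).

Lemma size_theta_poly Q s N w :
  Q != 0 -> w N != 0 -> size (theta_poly Q s N w) = N.+1.
Proof. by move=> Q_neq0 wN_neq0; rewrite size_poly_eq // mulf_neq0 ?invr_eq0 ?expf_neq0. Qed.

Lemma theta_poly_root_lt0 Q s N w x :
  0 < Q -> (forall i, 0 < w i) -> root (theta_poly Q s N w) x -> x < 0.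
Proof.
move=> Q_gt0 w_gt0; apply: nonneg_coef_root_lt0 => [i|]; rewrite coef_poly //.
by case: ifP => // _; rewrite ltW ?divr_gt0 ?exprn_gt0.
by rewrite divr_gt0 ?exprn_gt0.
Qed.

(* The two exponents of [Q] differ by [(i - j)^2 >= 1]. *)
Lemma theta_term_le_peak Q s i j : 1 <= Q -> i != j ->
  Q ^+ (2 * (j + s) * i) / Q ^+ ((i + s) ^ 2)
    <= Q ^+ (2 * (j + s) * j) / Q ^+ ((j + s) ^ 2) / Q.
Proof.
move=> Q_ge1 neq_ij; have Q_gt0 : 0 < Q by apply: lt_le_trans Q_ge1.
rewrite ler_pdivlMr // mulrAC -exprSr ler_pdivrMr ?exprn_gt0 //.
rewrite mulrAC ler_pdivlMr ?exprn_gt0 // -!exprD; apply: ler_weXn2l => //.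
have [lt_ij|lt_ji] : (i < j \/ j < i)%N by lia.
all: nia.
Qed.

Lemma theta_poly_sign Q s N w j :
  1 <= Q -> (2 * N)%:R < Q -> (forall i, 1 <= w i <= 2) -> (j <= N)%N ->
  0 < (-1) ^+ j * (theta_poly Q s N w).[- Q ^+ (2 * (j + s))].
Proof.
move=> Q_ge1 Q_gt2N w_bd le_jN; have Q_gt0 : 0 < Q by apply: lt_le_trans Q_ge1.
pose T i := Q ^+ (2 * (j + s) * i) / Q ^+ ((i + s) ^ 2).
have T_gt0 i : 0 < T i by rewrite divr_gt0 ?exprn_gt0.
have w_ge1 i : 1 <= w i by have /andP[] := w_bd i.
have w_gt0 i : 0 < w i := lt_le_trans ltr01 (w_ge1 i).
have signed_term i : (-1) ^+ j * (w i / Q ^+ ((i + s) ^ 2) * (- Q ^+ (2 * (j + s))) ^+ i)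
    = (-1) ^+ (i + j) * (w i * T i).
  by rewrite /T -[- Q ^+ _]mulN1r exprMn -exprM exprD; ring.
pose j0 : 'I_N.+1 := Ordinal (le_jN : (j < N.+1)%N).
rewrite horner_poly mulr_sumr; apply: (sumr_gt0_dominant (j := j0)).
rewrite signed_term /= [(-1) ^+ (j + j)]exprD -expr2 sqrr_sign mul1r.
have off_peak (i : 'I_N.+1) : i != j0 ->
    `|(-1) ^+ j * (w i / Q ^+ ((i + s) ^ 2) * (- Q ^+ (2 * (j + s))) ^+ i)|
      <= 2 * (T j / Q).
  move=> neq_ij; rewrite signed_term normrMsign ger0_norm; last first.
    by rewrite mulr_ge0 // ltW.
  apply: ler_pM; [exact/ltW | exact/ltW | by have /andP[] := w_bd i |].
  apply: theta_term_le_peak => //; apply: contraNneq neq_ij => eq_ij; exact/eqP/val_inj.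
apply: le_lt_trans (ler_sum _ off_peak) _.
rewrite sumr_const cardC1 card_ord /=.
have -> : 2 * (T j / Q) *+ N = (2 * N)%:R / Q * T j by rewrite natrM -mulr_natr; ring.
apply: lt_le_trans (ler_peMl (ltW (T_gt0 j)) (w_ge1 j)).
by rewrite gtr_pMl // ltr_pdivrMr // mul1r.
Qed.

Lemma real_rooted_theta_poly Q s N w :
  1 < Q -> (2 * N)%:R < Q -> (forall i, 1 <= w i <= 2) ->
  real_rooted (theta_poly Q s N w).
Proof.
move=> Q_gt1 Q_gt2N w_bd; have Q_gt0 : 0 < Q := lt_trans ltr01 Q_gt1.
apply: (real_rooted_sign_changes (y := fun j => - Q ^+ (2 * (j + s)))).
- have /andP[wN_ge1 _] := w_bd N; have wN_gt0 : 0 < w N := lt_le_trans ltr01 wN_ge1.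
  by rewrite size_theta_poly // gt_eqF.
- by move=> j _; rewrite ltrN2 ltr_eXn2l //; lia.
- by move=> j; apply: theta_poly_sign; rewrite // ltW.
Qed.

Lemma theta_poly_mulXn_add Q n :
  theta_poly Q n n (fun=> 1) * 'X^n + theta_poly Q 0 n (fun=> 1)
  = theta_poly Q 0 (2 * n) (fun i => (i == n).+1%:R).
Proof.
apply/polyP => i; rewrite coefD coefMXn !coef_poly addn0.
case: ltngtP => [lt_in|lt_ni|->].
- by rewrite add0r ifT ?ifT //; lia.
- have -> : (i < n.+1)%N = false by lia.
  have -> : (i - n < n.+1)%N = (i < (2 * n).+1)%N by lia.
  by rewrite subnK ?addr0 ?(gtn_eqF lt_ni) // ltnW.
- have -> : (n < (2 * n).+1)%N by lia.
  by rewrite subnn add0n ltnS leqnn /= -mulrDl.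
Qed.

End ThetaPoly.

Theorem corollary5p2 (R : realType) (n : nat) (hn : (1 <= n)%N) :
  exists a1 a2 b : {poly R},
    [/\ size a1 = n.+1, size a2 = n.+1, size b = n.+1,
        [/\ real_rooted a1, real_rooted a2, real_rooted b
          & real_rooted (a1 * b + a2)] &
        forall x y : R, root b y ->
          (root a2 x \/ root (a1 * b + a2) x) -> x < y].
Proof.
(* The construction works for [n = 0] as well. *)
pose Q : R := (4 * n).+1%:R.
have Q_gt1 : 1 < Q by rewrite ltr1n; lia.
have Q_gt0 : 0 < Q := lt_trans ltr01 Q_gt1.
have Q_large N : (N <= 2 * n)%N -> (2 * N)%:R < Q by move=> le_N; rewrite ltr_nat; lia.
have one_bd (i : nat) : 1 <= (1 : R) <= 2 by rewrite lexx ler1n.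
have two_bd (i : nat) : 1 <= ((i == n).+1%:R : R) <= 2 by rewrite ler1n ler_nat; case: (i == n).
exists (theta_poly Q n n (fun=> 1)), (theta_poly Q 0 n (fun=> 1)), 'X^n.
rewrite theta_poly_mulXn_add; split.
- by rewrite size_theta_poly ?gt_eqF ?oner_neq0.
- by rewrite size_theta_poly ?gt_eqF ?oner_neq0.
- exact: size_polyXn.
- by split; try apply: real_rooted_Xn; apply: real_rooted_theta_poly => //; apply: Q_large; lia.
- move=> x y; rewrite /root hornerXn expf_eq0 => /andP[_ /eqP ->].
  by case=> /theta_poly_root_lt0; apply=> //= i; rewrite ?ltr01 ?ltr0Sn.
Qed.
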